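(* Let $n\ge2$, $h=0$ and $\epsilon\in[-1,1]$. For $0\le p\le 2n$, $$\min_{\sigma\in\mathcal C(p)}H(\sigma)=\begin{cases}n-(p-n)^2-p^2-\epsilon(n-2p) & 0\le p\le n,\\ n-(2n-p)^2-(p-n)^2-\epsilon(2p-3n) & n\le p\le 2n.\end{cases}$$ Moreover, for $0\le p\le n$ this minimum is attained on $C(p,0,0)$ and on $C(0,p,0)$, and for $n\le p\le 2n$ it is attained on $C(n,p-n,p-n)$ and on $C(p-n,n,p-n)$.
   Context: The graph $\mathcal G(2,n)$ has vertex set $V=V^{(1)}\cup V^{(2)}$ with $V^{(1)}=\{1,\dots,n\}$, $V^{(2)}=\{n+1,\dots,2n\}$; its edge set is $E=E_{\mathrm{int}}\cup E_{\mathrm{cross}}$, where $E_{\mathrm{int}}$ consists of all pairs of distinct vertices in the same $V^{(k)}$ and $E_{\mathrm{cross}}=\{\{i,i+n\}:1\le i\le n\}$. For $\sigma\in\{-1,+1\}^V$, $H(\sigma)=-\sum_{\{i,j\}\in E_{\mathrm{int}}}\sigma_i\sigma_j-\epsilon\sum_{\{i,j\}\in E_{\mathrm{cross}}}\sigma_i\sigma_j-h\sum_{i\in V}\sigma_i$. $C(p_1,p_2,a)$ is the set of configurations with exactly $p_1$ vertices of spin $+1$ in $V^{(1)}$, exactly $p_2$ vertices of spin $+1$ in $V^{(2)}$, and exactly $a$ cross-edges both of whose endpoints have spin $+1$. $\mathcal C(p)$ is the set of configurations with exactly $p$ vertices of spin $+1$ in $V$. *)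

From HB Require Import structures.
From mathcomp Require Import all_boot all_order all_algebra.
Set Implicit Arguments. Unset Strict Implicit. Unset Printing Implicit Defensive.
Import Order.TTheory GRing.Theory Num.Theory.
Local Open Scope ring_scope.

(* V^(1) = {lshift n k | k < n} (vertices 1..n),
   V^(2) = {rshift n k | k < n} (vertices n+1..2n); the cross edges are
   {lshift n k, rshift n k}, i.e. {i, i+n}. *)

Definition config (n : nat) := 'I_(n + n) -> bool.

Definition spin (R : pzRingType) (b : bool) : R := if b then 1 else -1.

Definition same_block (n : nat) (i j : 'I_(n + n)) : bool := (i < n)%N == (j < n)%N.

Definition Ham (R : pzRingType) (n : nat) (eps h : R) (sigma : config n) : R :=
  - (\sum_(i < n + n) \sum_(j < n + n | ((i < j)%N && same_block i j))
        spin R (sigma i) * spin R (sigma j))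
  - eps * (\sum_(k < n) spin R (sigma (lshift n k)) * spin R (sigma (rshift n k)))
  - h * (\sum_(i < n + n) spin R (sigma i)).

Definition inC (n : nat) (p1 p2 a : nat) (sigma : config n) : Prop :=
  [/\ #|[set k : 'I_n | sigma (lshift n k)]| = p1,
      #|[set k : 'I_n | sigma (rshift n k)]| = p2 &
      #|[set k : 'I_n | sigma (lshift n k) && sigma (rshift n k)]| = a].

Definition inCp (n : nat) (p : nat) (sigma : config n) : Prop :=
  #|[set i : 'I_(n + n) | sigma i]| = p.

From HB Require Import structures.
From mathcomp Require Import all_boot all_order all_algebra.
From mathcomp Require Import ring lra zify.
Import Order.TTheory GRing.Theory Num.Theory.
Set Implicit Arguments. Unset Strict Implicit. Unset Printing Implicit Defensive.
Local Open Scope ring_scope.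

(* With x, y the numbers of +1 spins in the two blocks and z the number of
   cross edges with both ends +1, the energy at h = 0 depends only on (x, y, z),
   and the admissible triples are exactly those with z <= x, z <= y and
   x + y <= n + z.  Moving all +1 spins into one block lowers the energy by
   4 (x y - eps z) >= 0, since z <= min x y <= x y and eps <= 1; this gives the
   bound for p <= n.  For p >= n apply the same bound to the configuration with
   every spin reversed, which has the same energy and 2n - p spins +1. *)

Lemma card_ord_interval n a b : #|[set k : 'I_n | (a <= k < b)%N]| = (minn b n - a)%N.
Proof.
rewrite -sum1dep_card -(big_mkord (fun k => a <= k < b)%N (fun=> 1%N)).
elim: n => [|n IHn]; first by rewrite big_geq // minn0.
rewrite big_mkcond big_nat_recr //= -big_mkcond IHn; case: ifP; lia.
Qed.

Lemma sumr_nat_bool (R : pzSemiRingType) (T : finType) (b : T -> bool) :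
  \sum_i ((b i)%:R : R) = #|[set i | b i]|%:R.
Proof.
by rewrite -sum1dep_card natr_sum [RHS]big_mkcond; apply: eq_bigr => i _; case: (b i).
Qed.

Section Spins.
Variable R : comPzRingType.

Lemma spinE b : spin R b = 2 * b%:R - 1.
Proof. by case: b; rewrite /spin /=; ring. Qed.

Lemma spin_mul_spin b : spin R b * spin R b = 1.
Proof. by case: b; rewrite /spin /=; ring. Qed.

Lemma spinM a b : spin R a * spin R b = 1 - 2 * a%:R - 2 * b%:R + 4 * (a && b)%:R.
Proof. by case: a; case: b; rewrite /spin /=; ring. Qed.

Lemma sum_spin (T : finType) (b : T -> bool) :
  \sum_i spin R (b i) = 2 * #|[set i | b i]|%:R - #|T|%:R.
Proof.
under eq_bigr do rewrite spinE.
by rewrite sumrB -mulr_sumr sumr_nat_bool sumr_const -mulr_natr mul1r.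
Qed.

End Spins.

Lemma sum_sym_pairs (R : pzSemiRingType) m (F : 'I_m -> 'I_m -> R) :
    (forall i j, F i j = F j i) ->
  \sum_(i < m) \sum_(j < m) F i j
    = (\sum_(i < m) \sum_(j < m | (i < j)%N) F i j) *+ 2 + \sum_(i < m) F i i.
Proof.
move=> FC.
have lower (i : 'I_m) :
    \sum_(j < m | ~~ (i < j)%N) F i j = \sum_(j < m | (j < i)%N) F i j + F i i.
  rewrite (bigD1 i) ?ltnn //= addrC; congr (_ + _).
  by apply: eq_bigl => j; rewrite -leqNgt ltn_neqAle andbC.
have swap : \sum_(i < m) \sum_(j < m | (j < i)%N) F i j
    = \sum_(i < m) \sum_(j < m | (i < j)%N) F i j.
  rewrite (exchange_big_dep xpredT) //=.
  by apply: eq_bigr => i _; apply: eq_bigr => j _; rewrite FC.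
under eq_bigr => i _ do rewrite (bigID (fun j : 'I_m => i < j)%N) lower /=.
by rewrite !big_split /= swap mulr2n addrA.
Qed.

Lemma sum_same_block (R : nmodType) n (G : 'I_(n + n) -> 'I_(n + n) -> R) :
  \sum_(i < n + n) \sum_(j < n + n | same_block i j) G i j
  = \sum_(k < n) \sum_(l < n) G (lshift n k) (lshift n l)
    + \sum_(k < n) \sum_(l < n) G (rshift n k) (rshift n l).
Proof.
have rshift_ge (k : 'I_n) : (rshift n k < n)%N = false by rewrite ltnNge leq_addr.
rewrite big_split_ord /=; congr (_ + _); apply: eq_bigr => k _.
  rewrite big_split_ord /= [X in _ + X]big_pred0 ?addr0 => [|l].
    by apply: eq_bigl => l; rewrite /same_block /= !ltn_ord.
  by rewrite /same_block /= ltn_ord rshift_ge.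
rewrite big_split_ord /= [X in X + _]big_pred0 ?add0r => [|l].
  by apply: eq_bigl => l; rewrite /same_block !rshift_ge.
by rewrite /same_block /= ltn_ord rshift_ge.
Qed.

Lemma pair_sum_blocks (R : comPzRingType) n (s : 'I_(n + n) -> R) :
    (forall i, s i * s i = 1) ->
  (\sum_(i < n + n) \sum_(j < n + n | (i < j)%N && same_block i j) s i * s j) *+ 2
  = (\sum_(k < n) s (lshift n k)) ^+ 2 + (\sum_(k < n) s (rshift n k)) ^+ 2 - (n + n)%:R.
Proof.
move=> s_unit.
pose F i j := if same_block i j then s i * s j else 0.
have F_sym i j : F i j = F j i by rewrite /F /same_block eq_sym mulrC.
have diag : \sum_(i < n + n) F i i = (n + n)%:R.
  rewrite -[in RHS](card_ord (n + n)) -sumr_const.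
  by apply: eq_bigr => i _; rewrite /F /same_block eqxx s_unit.
have full : \sum_(i < n + n) \sum_(j < n + n) F i j
    = (\sum_(k < n) s (lshift n k)) ^+ 2 + (\sum_(k < n) s (rshift n k)) ^+ 2.
  under eq_bigr do rewrite -big_mkcond.
  rewrite sum_same_block !expr2 !mulr_suml.
  by congr (_ + _); apply: eq_bigr => k _; rewrite mulr_sumr.
rewrite -full sum_sym_pairs // diag addrK.
by congr (_ *+ 2); apply: eq_bigr => i _; rewrite big_mkcondr.
Qed.

Section Counts.
Variables (n : nat) (sigma : config n).

Definition plus1 := #|[set k : 'I_n | sigma (lshift n k)]|.
Definition plus2 := #|[set k : 'I_n | sigma (rshift n k)]|.
Definition plus12 := #|[set k : 'I_n | sigma (lshift n k) && sigma (rshift n k)]|.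

Lemma card_plus : #|[set i | sigma i]| = (plus1 + plus2)%N.
Proof. by rewrite /plus1 /plus2 -!sum1dep_card big_split_ord. Qed.

Lemma plus12_le1 : (plus12 <= plus1)%N.
Proof. by apply/subset_leq_card/subsetP => k; rewrite !inE => /andP[]. Qed.

Lemma plus12_le2 : (plus12 <= plus2)%N.
Proof. by apply/subset_leq_card/subsetP => k; rewrite !inE => /andP[]. Qed.

Lemma plus1_plus2_le : (plus1 + plus2 <= n + plus12)%N.
Proof.
rewrite /plus1 /plus2 -cardsUI leq_add //; last first.
  by apply/subset_leq_card/subsetP => k; rewrite !inE.
by apply: leq_trans (max_card _) _; rewrite card_ord.
Qed.

End Counts.

(* Twice the internal pair sum of a block with x spins +1 is (2x - n)^2 - n;
   the cross-edge sum is n - 2x - 2y + 4z. *)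
Definition energy (R : pzRingType) (n : nat) (eps : R) (x y z : nat) : R :=
  n%:R - n%:R ^+ 2 + 2 * n%:R * (x%:R + y%:R) - 2 * (x%:R ^+ 2 + y%:R ^+ 2)
  - eps * (n%:R - 2 * (x%:R + y%:R) + 4 * z%:R).

Lemma Ham_energy (R : numFieldType) n (eps : R) (sigma : config n) :
  Ham eps 0 sigma = energy n eps (plus1 sigma) (plus2 sigma) (plus12 sigma).
Proof.
have internal := pair_sum_blocks (fun i => spin_mul_spin R (sigma i)).
rewrite !sum_spin card_ord -/(plus1 sigma) -/(plus2 sigma) -mulr_natl in internal.
have cross : \sum_(k < n) spin R (sigma (lshift n k)) * spin R (sigma (rshift n k))
    = n%:R - 2 * (plus1 sigma)%:R - 2 * (plus2 sigma)%:R + 4 * (plus12 sigma)%:R.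
  under eq_bigr do rewrite spinM.
  rewrite !big_split /= !sumrN -!mulr_sumr !sumr_nat_bool sumr_const card_ord.
  by rewrite -mulr_natr mul1r.
apply: (mulfI (_ : (2 : R) != 0)); first by rewrite pnatr_eq0.
rewrite /Ham mul0r subr0 cross mulrBr mulrN internal /energy natrD.
ring.
Qed.

Section EnergyBounds.
Variables (R : realDomainType) (n : nat) (eps : R).

Lemma energyC x y z : energy n eps x y z = energy n eps y x z.
Proof. by rewrite /energy; ring. Qed.

Lemma energy_full_block q : (q <= n)%N -> energy n eps n q q = energy n eps (n - q) 0 0.
Proof. by move=> le_qn; rewrite /energy natrB //; ring. Qed.

(* Reversing every spin; the n + z - x - y cross edges with both ends -1
   become those with both ends +1. *)
Lemma energy_flip x y z : (z <= x)%N -> (z <= y)%N -> (x + y <= n + z)%N ->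
  energy n eps (n - x) (n - y) (n + z - x - y) = energy n eps x y z.
Proof.
move=> le_zx le_zy le_xy.
have flipped : (n + z - x - y)%:R = n%:R + z%:R - x%:R - y%:R :> R.
  by rewrite -!natrD -!natrB //; lia.
by rewrite /energy flipped !natrB //; try lia; ring.
Qed.

Lemma energy_concentrate x y z : eps <= 1 -> (z <= x)%N -> (z <= y)%N ->
  energy n eps (x + y) 0 0 <= energy n eps x y z.
Proof.
move=> eps_le1 le_zx le_zy.
have gap : energy n eps x y z - energy n eps (x + y) 0 0
    = 4 * (x%:R * y%:R - eps * z%:R).
  by rewrite /energy natrD; ring.
have le_z_xy : z%:R <= x%:R * y%:R :> R by rewrite -natrM ler_nat; nia.
have eps_z : 0 <= (1 - eps) * z%:R by rewrite mulr_ge0 ?subr_ge0.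
by rewrite -subr_ge0 gap mulr_ge0 //; lra.
Qed.

End EnergyBounds.

Section GroundState.
Variables (R : realFieldType) (n : nat) (eps : R).
Hypothesis eps_le1 : eps <= 1.

Lemma Ham_ge_concentrated (sigma : config n) :
  energy n eps (plus1 sigma + plus2 sigma) 0 0 <= Ham eps 0 sigma.
Proof. by rewrite Ham_energy energy_concentrate ?plus12_le1 ?plus12_le2. Qed.

Lemma Ham_ge_flipped (sigma : config n) :
  energy n eps (n + n - (plus1 sigma + plus2 sigma)) 0 0 <= Ham eps 0 sigma.
Proof.
have := plus12_le1 sigma; have := plus12_le2 sigma; have := plus1_plus2_le sigma.
rewrite Ham_energy; set x := plus1 sigma; set y := plus2 sigma; set z := plus12 sigma.
move=> le_xy le_zy le_zx; rewrite -(energy_flip eps le_zx) //.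
have -> : (n + n - (x + y) = (n - x) + (n - y))%N by lia.
by apply: energy_concentrate => //; lia.
Qed.

End GroundState.

Definition config_of_blocks n (b1 b2 : 'I_n -> bool) : config n :=
  fun i => match split i with inl k => b1 k | inr k => b2 k end.

Lemma inC_exists n x y z : (z <= x)%N -> (z <= y)%N -> (x + y <= n + z)%N ->
  exists sigma : config n, inC x y z sigma.
Proof.
move=> le_zx le_zy le_xy.
pose b1 (k : 'I_n) := (k < x)%N; pose b2 (k : 'I_n) := (x - z <= k < x - z + y)%N.
exists (config_of_blocks b1 b2).
have lshiftE k : config_of_blocks b1 b2 (lshift n k) = b1 k.
  by rewrite /config_of_blocks (unsplitK (inl k)).
have rshiftE k : config_of_blocks b1 b2 (rshift n k) = b2 k.
  by rewrite /config_of_blocks (unsplitK (inr k)).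
have card_interval a b : (b <= n)%N -> #|[set k : 'I_n | (a <= k < b)%N]| = (b - a)%N.
  by move=> le_bn; rewrite card_ord_interval (minn_idPl le_bn).
split.
- rewrite -[RHS]subn0 -card_interval; last lia.
  by apply: eq_card => k; rewrite !inE lshiftE.
- rewrite -[RHS](addKn (x - z)) -card_interval; last lia.
  by apply: eq_card => k; rewrite !inE rshiftE.
- rewrite -[RHS](subKn le_zx) -card_interval; last lia.
  apply: eq_card => k; rewrite !inE lshiftE rshiftE /b1 /b2; lia.
Qed.

Lemma Ham_inC (R : numFieldType) n (eps : R) x y z (sigma : config n) :
  inC x y z sigma -> Ham eps 0 sigma = energy n eps x y z.
Proof. by case=> <- <- <-; exact: Ham_energy. Qed.

Lemma inC_attains (R : numFieldType) n (eps : R) x y z e :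
    (z <= x)%N -> (z <= y)%N -> (x + y <= n + z)%N -> energy n eps x y z = e ->
  (exists sigma : config n, inC x y z sigma) /\
  (forall sigma : config n, inC x y z sigma -> Ham eps 0 sigma = e).
Proof.
move=> le_zx le_zy le_xy <-; split; first exact: inC_exists.
by move=> sigma; exact: Ham_inC.
Qed.

Lemma inC_inCp n x y z (sigma : config n) : inC x y z sigma -> inCp (x + y) sigma.
Proof. by case=> <- <- _; rewrite /inCp card_plus. Qed.

Theorem proposition4p4 (R : realFieldType) (n : nat) (eps : R) (p : nat) :
  (2 <= n)%N -> -1 <= eps <= 1 -> (p <= n + n)%N ->
  let m : R :=
    if (p <= n)%N
    then n%:R - (p%:R - n%:R) ^+ 2 - p%:R ^+ 2 - eps * (n%:R - 2 * p%:R)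
    else n%:R - ((n + n)%:R - p%:R) ^+ 2 - (p%:R - n%:R) ^+ 2
           - eps * (2 * p%:R - 3 * n%:R) in
  ((exists sigma : config n, inCp p sigma /\ Ham eps 0 sigma = m) /\
   (forall sigma : config n, inCp p sigma -> m <= Ham eps 0 sigma)) /\
  ((p <= n)%N ->
     ((exists sigma : config n, inC p 0 0 sigma) /\
      (forall sigma : config n, inC p 0 0 sigma -> Ham eps 0 sigma = m)) /\
     ((exists sigma : config n, inC 0 p 0 sigma) /\
      (forall sigma : config n, inC 0 p 0 sigma -> Ham eps 0 sigma = m))) /\
  ((n <= p)%N ->
     ((exists sigma : config n, inC n (p - n) (p - n) sigma) /\
      (forall sigma : config n, inC n (p - n) (p - n) sigma -> Ham eps 0 sigma = m)) /\
     ((exists sigma : config n, inC (p - n) n (p - n) sigma) /\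
      (forall sigma : config n, inC (p - n) n (p - n) sigma -> Ham eps 0 sigma = m))).
Proof.
move=> _ /andP[_ eps_le1] le_p2n m.
have m_low : (p <= n)%N -> m = energy n eps p 0 0.
  by move=> le_pn; rewrite /m le_pn /energy; ring.
have m_high : (n <= p)%N -> m = energy n eps (n - (p - n)) 0 0.
  move=> le_np; have flipped : (n - (p - n))%:R = (n + n)%:R - p%:R :> R.
    by rewrite -natrB; [congr _%:R | ]; lia.
  rewrite /m /energy flipped natrD; case: ifP => [le_pn | _]; last ring.
  have -> : p = n by lia.
  ring.
split; last first.
  split=> [le_pn | le_np]; split; apply: inC_attains; try lia.
  - by rewrite m_low.
  - by rewrite energyC m_low.
  - by rewrite energy_full_block ?m_high //; lia.
  - by rewrite energyC energy_full_block ?m_high //; lia.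
split.
- have [le_pn | lt_np] := leqP p n.
    have [sigma C] : exists sigma : config n, inC p 0 0 sigma by apply: inC_exists; lia.
    exists sigma; rewrite (Ham_inC _ C) m_low //; split=> //.
    by rewrite -[p]addn0; exact: inC_inCp C.
  have [sigma C] : exists sigma : config n, inC n (p - n) (p - n) sigma.
    by apply: inC_exists; lia.
  exists sigma; rewrite (Ham_inC _ C) energy_full_block ?m_high; try lia; split=> //.
  by rewrite -(subnKC (ltnW lt_np)); exact: inC_inCp C.
- move=> sigma; rewrite /inCp card_plus => p_eq.
  have [le_pn | lt_np] := leqP p n.
    by rewrite m_low // -p_eq Ham_ge_concentrated.
  by rewrite m_high -?p_eq ?subnBA ?Ham_ge_flipped //; lia.
Qed.
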